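(* Let $E_1,E_2$ be operator spaces of common finite dimension $k$, with bases $(e^1_1,\dots,e^1_k)$ of $E_1$ and $(e^2_1,\dots,e^2_k)$ of $E_2$ that are completely $1$-unconditional: for every $\varepsilon=(\varepsilon_1,\dots,\varepsilon_k)\in\{-1,1\}^k$, the maps $V^1_\varepsilon\colon E_1\to E_1$, $V^1_\varepsilon(e^1_i)=\varepsilon_ie^1_i$, and $V^2_\varepsilon\colon E_2\to E_2$, $V^2_\varepsilon(e^2_i)=\varepsilon_ie^2_i$, are complete contractions. Let $\Delta\colon E_1\otimes_hE_2\to E_1\otimes_hE_2$ be defined by $\Delta(e^1_i\otimes e^2_j)=0$ if $i\neq j$ and $\Delta(e^1_i\otimes e^2_i)=e^1_i\otimes e^2_i$. Then $\Delta$ is a complete contraction.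
   Context: $\otimes_h$ denotes the Haagerup tensor product of operator spaces. *)

From HB Require Import structures.
From mathcomp Require Import all_boot all_order all_algebra.
From mathcomp Require Import boolp classical_sets reals.
From mathcomp Require Import complex.
Set Implicit Arguments. Unset Strict Implicit. Unset Printing Implicit Defensive.
Import Order.TTheory GRing.Theory Num.Theory.
Local Open Scope ring_scope.
Local Open Scope classical_set_scope.

Section OpSpaces.
Variable R : realType.
Local Notation C := R[i].

Definition cabs (c : C) : R := Num.sqrt (complex.Re c ^+ 2 + complex.Im c ^+ 2).

Definition vnorm n (v : 'cV[C]_n) : R := Num.sqrt (\sum_i cabs (v i 0) ^+ 2).

Definition opnorm m n (A : 'M[C]_(m, n)) : R :=
  sup [set vnorm (A *m v) | v in [set v : 'cV[C]_n | vnorm v <= 1]].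

(* A k-dimensional operator space with a fixed basis (e_1,...,e_k) is identified,
   through its basis, with C^k.  An element of M_n(E) is then given by its
   coefficient matrices: x = sum_a x a (x) e_a, with x : 'I_k -> 'M_n.
   An (abstract) operator space structure is a family of norms on M_n(E)
   satisfying Ruan's axioms. *)
Definition mxE k n := 'I_k -> 'M[C]_n.
Definition mxnorms k := forall n, mxE k n -> R.

Definition is_opspace k (N : mxnorms k) : Prop :=
  [/\
      (forall n (x : mxE k n), 0 <= N n x) /\
      (forall n (x : mxE k n), N n x = 0 -> forall a, x a = 0),
      (forall n (c : C) (x : mxE k n), N n (fun a => c *: x a) = cabs c * N n x),
      (forall n (x y : mxE k n), N n (fun a => x a + y a) <= N n x + N n y),
      (forall m n (al : 'M[C]_(n, m)) (x : mxE k m) (be : 'M[C]_(m, n)),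
          N n (fun a => al *m x a *m be) <= opnorm al * N m x * opnorm be) &
      (forall m n (x : mxE k m) (y : mxE k n),
          N (m + n)%N (fun a => block_mx (x a) 0 0 (y a)) = Num.max (N m x) (N n y))].

(* The norm of a rectangular matrix x in M_{n,p}(E): norm of the square matrix
   obtained by padding x with zeros. *)
Definition padmx n p (A : 'M[C]_(n, p)) : 'M[C]_(n + p) :=
  castmx (erefl _, addnC p n) (block_mx A (0 : 'M_(n, n)) (0 : 'M_(p, p)) (0 : 'M_(p, n))).

Definition rnorm k (N : mxnorms k) n p (x : 'I_k -> 'M[C]_(n, p)) : R :=
  N (n + p)%N (fun a => padmx (x a)).

Definition compl_uncond k (N : mxnorms k) : Prop :=
  forall eps : 'I_k -> C, (forall i, eps i = 1 \/ eps i = -1) ->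
  forall n (x : mxE k n), N n (fun a => eps a *: x a) <= N n x.

(* Elements of M_n(E1 (x) E2), in the basis (e1_a (x) e2_b). *)
Definition mxT k n := 'I_k -> 'I_k -> 'M[C]_n.

(* Haagerup tensor norm on M_n(E1 (x)_h E2):
   ||u||_h = inf { ||x||_{M_{n,p}(E1)} ||y||_{M_{p,n}(E2)} : u = x (.) y },
   where (x (.) y)_{ij} = sum_l x_{il} (x) y_{lj}, i.e. the coefficient of
   e1_a (x) e2_b is the matrix product x_a y_b. *)
Definition haagerup_norm k (N1 N2 : mxnorms k) n (u : mxT k n) : R :=
  inf [set r : R | exists p (x : 'I_k -> 'M[C]_(n, p)) (y : 'I_k -> 'M[C]_(p, n)),
         (forall a b, u a b = x a *m y b) /\ r = rnorm N1 x * rnorm N2 y].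

Definition Delta k n (u : mxT k n) : mxT k n :=
  fun a b => if a == b then u a b else 0.

End OpSpaces.

From HB Require Import structures.
From mathcomp Require Import all_boot all_order all_algebra.
From mathcomp Require Import boolp classical_sets reals.
From mathcomp Require Import complex.
From mathcomp Require Import ring lra.
Import Order.TTheory GRing.Theory Num.Theory.
Local Open Scope ring_scope.
Local Open Scope classical_set_scope.

(* Fix i and let eps be the sign vector with eps_i = 1 and eps_a = -1 for a <> i.
   From a factorisation u = x (.) y one gets the factorisation
   [x, eps x] (.) 1/2 [y; eps y] of the matrix keeping exactly the entries u_ab
   with (a = i <-> b = i).  By Ruan's axioms a row (or column) of two elements has
   norm at most sqrt 2 times the larger norm, and by complete unconditionality
   eps x and eps y are no larger than x and y, so the product of the norms does
   not increase.  Doing this for every i removes precisely the off-diagonal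
   entries. *)

Section HaagerupDelta.
Set Implicit Arguments. Unset Strict Implicit.
Variable R : realType.
Local Notation C := R[i].

Lemma cabs_sqr (c : C) : cabs c ^+ 2 = complex.Re c ^+ 2 + complex.Im c ^+ 2.
Proof. by rewrite /cabs sqr_sqrtr // addr_ge0 ?sqr_ge0. Qed.

Lemma cabs0 : cabs (0 : C) = 0.
Proof. by rewrite /cabs /= expr0n /= addr0 sqrtr0. Qed.

Lemma cabs_half : cabs (2^-1 : C) = 2^-1.
Proof.
have -> : (2^-1 : C) = real_complex R (2^-1) by rewrite fmorphV rmorph_nat.
by rewrite /cabs /= expr0n /= addr0 sqrtr_sqr ger0_norm // invr_ge0 ler0n.
Qed.

Lemma cabsD_sqr (a b : C) : cabs (a + b) ^+ 2 <= 2 * (cabs a ^+ 2 + cabs b ^+ 2).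
Proof.
rewrite !cabs_sqr !raddfD /=.
have := sqr_ge0 (complex.Re a - complex.Re b).
have := sqr_ge0 (complex.Im a - complex.Im b).
rewrite !expr2; nra.
Qed.

Definition vnorm2 m (v : 'cV[C]_m) : R := \sum_i cabs (v i 0) ^+ 2.

Lemma vnormE m (v : 'cV[C]_m) : vnorm v = Num.sqrt (vnorm2 v).
Proof. by []. Qed.

Lemma vnorm2_ge0 m (v : 'cV[C]_m) : 0 <= vnorm2 v.
Proof. by apply: sumr_ge0 => i _; rewrite sqr_ge0. Qed.

Lemma vnorm2_0 m : vnorm2 (0 : 'cV[C]_m) = 0.
Proof. by rewrite /vnorm2 big1 // => i _; rewrite mxE cabs0 expr0n. Qed.

Lemma vnorm2_col a b (u : 'cV[C]_a) (w : 'cV[C]_b) :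
  vnorm2 (col_mx u w) = vnorm2 u + vnorm2 w.
Proof.
rewrite /vnorm2 big_split_ord /=.
by congr (_ + _); apply: eq_bigr => i _; rewrite ?col_mxEu ?col_mxEd.
Qed.

Lemma vnorm2D m (u w : 'cV[C]_m) : vnorm2 (u + w) <= 2 * (vnorm2 u + vnorm2 w).
Proof.
rewrite /vnorm2 -big_split mulr_sumr /=; apply: ler_sum => i _.
by rewrite mxE cabsD_sqr.
Qed.

Lemma col_mx_ind a b l (P : 'M[C]_(a + b, l) -> Prop) :
  (forall u w, P (col_mx u w)) -> forall v, P v.
Proof. by move=> PE v; rewrite -[v]vsubmxK. Qed.

Definition sq_bounded m n (c : R) (A : 'M[C]_(m, n)) :=
  forall v, vnorm2 (A *m v) <= c * vnorm2 v.

Lemma sq_bounded_mul m n l c d (A : 'M[C]_(m, n)) (B : 'M[C]_(n, l)) :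
  0 <= c -> sq_bounded c A -> sq_bounded d B -> sq_bounded (c * d) (A *m B).
Proof. by move=> c0 bA bB v; rewrite -mulmxA (le_trans (bA _)) // -mulrA ler_wpM2l. Qed.

Lemma sq_bounded_opnorm m n c (A : 'M[C]_(m, n)) :
  0 <= c -> sq_bounded c A -> 0 <= opnorm A /\ opnorm A <= Num.sqrt c.
Proof.
move=> c0 bA.
set S := [set vnorm (A *m v) | v in [set v : 'cV[C]_n | vnorm v <= 1]].
have S_ub : ubound S (Num.sqrt c).
  move=> _ [v v1 <-]; rewrite vnormE ler_sqrt //.
  apply: (le_trans (bA v)); rewrite -[X in _ <= X]mulr1 ler_wpM2l //.
  by move: v1; rewrite /= vnormE -(sqrtr1 R) ler_sqrt // sqrtr1.
have S0 : S 0.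
  by exists 0 => /=; rewrite ?mulmx0 vnormE vnorm2_0 sqrtr0 ?ler01.
split; last by apply: ge_sup => //; exists 0.
by apply: le_trans (sup_upper_bound _ S0) => //; split; [exists 0 | exists (Num.sqrt c)].
Qed.

Definition col_cast1 a b (e : a = b) : 'M[C]_(a, b) := castmx (erefl a, e) 1%:M.
Definition row_cast1 a b (e : a = b) : 'M[C]_(b, a) := castmx (e, erefl a) 1%:M.

Lemma castmx_col_cast1 a b c (e : a = b) (M : 'M[C]_(c, a)) :
  castmx (erefl c, e) M = M *m col_cast1 e.
Proof. by case: b / e; rewrite /col_cast1 !castmx_id mulmx1. Qed.

Lemma col_cast1K a b (e : a = b) : col_cast1 e *m row_cast1 e = 1%:M.
Proof. by case: b / e; rewrite /col_cast1 /row_cast1 castmx_id mul1mx. Qed.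

Lemma sq_bounded_col_cast1 a b (e : a = b) : sq_bounded 1 (col_cast1 e).
Proof. by case: b / e => v; rewrite /col_cast1 castmx_id mul1mx mul1r. Qed.

Lemma sq_bounded_diag_row_cast1 a b (e : a = b) :
  sq_bounded 1 (block_mx (row_cast1 e) 0 0 (row_cast1 e) : 'M[C]_(b + b, a + a)).
Proof.
case: b / e; apply: col_mx_ind => u w.
by rewrite mul_block_col !mul0mx addr0 add0r /row_cast1 castmx_id !mul1mx mul1r.
Qed.

Definition zpad n p (A : 'M[C]_(n, p)) : 'M[C]_(n + p, p + n) := block_mx A 0 0 0.

Lemma padmxE n p (A : 'M[C]_(n, p)) : padmx A = zpad A *m col_cast1 (addnC p n).
Proof. exact: castmx_col_cast1. Qed.

Lemma padmxZ n p (c : C) (A : 'M[C]_(n, p)) : padmx (c *: A) = c *: padmx A.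
Proof. by rewrite !padmxE /zpad scalemxAl scale_block_mx !scaler0. Qed.

Lemma diag_padmxE n p (A B : 'M[C]_(n, p)) :
  block_mx (zpad A) 0 0 (zpad B) =
  block_mx (padmx A) 0 0 (padmx B) *m
  block_mx (row_cast1 (addnC p n)) 0 0 (row_cast1 (addnC p n)).
Proof.
by rewrite mulmx_block !mulmx0 !mul0mx !addr0 !add0r !padmxE -!mulmxA col_cast1K !mulmx1.
Qed.

Lemma zpad_row_mx n p (A B : 'M[C]_(n, p)) :
  zpad (row_mx A B) =
  (col_mx (row_mx (row_mx 1%:M 0) (row_mx 1%:M 0)) 0 : 'M_(n + (p + p), _))
  *m block_mx (zpad A) 0 0 (zpad B)
  *m (col_mx (col_mx (row_mx (row_mx 1%:M 0) 0) 0) (col_mx (row_mx (row_mx 0 1%:M) 0) 0)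
       : 'M_(_, (p + p) + n)).
Proof.
rewrite /zpad !block_mxEv !mul_col_mx !mul0mx !mul_row_col.
rewrite !mul_mx_row ?mulmx0 ?row_mx0 !mul_row_col !mul1mx !mul0mx !addr0.
rewrite add_row_mx addr0 add0r !mul_row_col !mul0mx !addr0 !mul_mx_row !mulmx0 !mulmx1.
by rewrite ?mul0mx !add_row_mx !addr0 add0r.
Qed.

Lemma zpad_col_mx n p (A B : 'M[C]_(p, n)) :
  zpad (col_mx A B) =
  (col_mx (col_mx (row_mx (row_mx 1%:M 0) 0) (row_mx 0 (row_mx 1%:M 0))) 0
     : 'M_((p + p) + n, _))
  *m block_mx (zpad A) 0 0 (zpad B)
  *m (col_mx (col_mx (row_mx 1%:M 0) 0) (col_mx (row_mx 1%:M 0) 0) : 'M_(_, n + (p + p))).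
Proof.
rewrite /zpad !block_mxEv !mul_col_mx !mul0mx !mul_row_col.
rewrite !mul_mx_row ?mulmx0 ?row_mx0 !mul_row_col !mul1mx !mul0mx ?addr0 ?add0r.
rewrite !row_mx0 !addr0 !add0r !mul_row_col !mul0mx !addr0 !mul_mx_row !mulmx1 !mulmx0.
by rewrite ?row_mx0 ?addr0 add0r -block_mxEv block_mxEh col_mx0.
Qed.

Section RectangularNorms.
Variables (k : nat) (N : mxnorms R k).
Hypothesis HN : is_opspace N.

Lemma rnorm_ge0 n p (z : 'I_k -> 'M[C]_(n, p)) : 0 <= rnorm N z.
Proof. by case: HN => [[N0 _] _ _ _ _]; apply: N0. Qed.

Lemma rnormZ n p (c : C) (z : 'I_k -> 'M[C]_(n, p)) :
  rnorm N (fun a => c *: z a) = cabs c * rnorm N z.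
Proof.
case: HN => _ NZ _ _ _; rewrite /rnorm -NZ; congr (N _).
by apply: funext => a; rewrite padmxZ.
Qed.

Lemma rnorm_uncond (U : compl_uncond N) n p (eps : 'I_k -> C) :
  (forall i, eps i = 1 \/ eps i = -1) ->
  forall z : 'I_k -> 'M[C]_(n, p), rnorm N (fun a => eps a *: z a) <= rnorm N z.
Proof.
move=> eps_sign z; rewrite /rnorm.
under eq_fun do rewrite padmxZ.
exact: U.
Qed.

(* Ruan's axioms, transported through the zero padding. *)
Lemma rnorm_dilation n p n' p' c d (z1 z2 : 'I_k -> 'M[C]_(n, p))
    (w : 'I_k -> 'M[C]_(n', p'))
    (al : 'M[C]_(n' + p', (n + p) + (n + p))) (be : 'M[C]_((p + n) + (p + n), p' + n')) :
  0 <= c -> 0 <= d -> sq_bounded c al -> sq_bounded d be ->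
  (forall a, zpad (w a) = al *m block_mx (zpad (z1 a)) 0 0 (zpad (z2 a)) *m be) ->
  rnorm N w <= Num.sqrt c * Num.sqrt d * Num.max (rnorm N z1) (rnorm N z2).
Proof.
move=> c0 d0 b_al b_be wE; case: HN => [[N0 _] _ _ R1 R2].
set J := block_mx (row_cast1 (addnC p n)) 0 0 (row_cast1 (addnC p n)).
set be' := J *m be *m col_cast1 (addnC p' n').
have padwE : (fun a => padmx (w a)) =
    (fun a => al *m block_mx (padmx (z1 a)) 0 0 (padmx (z2 a)) *m be').
  by apply: funext => a; rewrite padmxE wE diag_padmxE /be' !mulmxA.
have b_be' : sq_bounded d be'.
  have := sq_bounded_mul ler01 (sq_bounded_diag_row_cast1 (addnC p n)) b_be.
  rewrite mul1r => b_Jbe.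
  by rewrite -[d]mulr1; apply: sq_bounded_mul d0 b_Jbe (sq_bounded_col_cast1 _).
have [al0 al_le] := sq_bounded_opnorm c0 b_al.
have [be0 be_le] := sq_bounded_opnorm d0 b_be'.
rewrite /rnorm padwE (le_trans (R1 _ _ _ _ _)) // R2 mulrAC.
by rewrite ler_pM // ?mulr_ge0 ?le_max ?N0 // ler_pM.
Qed.

Lemma rnorm_row_mx n p (z1 z2 : 'I_k -> 'M[C]_(n, p)) :
  rnorm N (fun a => row_mx (z1 a) (z2 a)) <=
  Num.sqrt 2 * Num.max (rnorm N z1) (rnorm N z2).
Proof.
rewrite -[Num.sqrt 2]mulr1 -{2}sqrtr1.
apply: rnorm_dilation (ler0n _ 2) ler01 _ _ (fun a => zpad_row_mx _ _).
- apply: col_mx_ind => u w; move: w; apply: col_mx_ind => v3 v4.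
  move: u; apply: col_mx_ind => v1 v2.
  rewrite mul_col_mx mul0mx !mul_row_col !mul1mx !mul0mx !addr0 !vnorm2_col vnorm2_0 addr0.
  by apply: le_trans (vnorm2D v1 v3) _; rewrite ler_wpM2l // lerD // lerDl vnorm2_ge0.
- apply: col_mx_ind => u w; move: u; apply: col_mx_ind => w1 w2.
  rewrite !mul_col_mx !mul_row_col !mul1mx !mul0mx !addr0 !add0r.
  by rewrite !vnorm2_col !vnorm2_0 !addr0 mul1r lerDl vnorm2_ge0.
Qed.

Lemma rnorm_col_mx n p (z1 z2 : 'I_k -> 'M[C]_(p, n)) :
  rnorm N (fun a => col_mx (z1 a) (z2 a)) <=
  Num.sqrt 2 * Num.max (rnorm N z1) (rnorm N z2).
Proof.
rewrite -[Num.sqrt 2]mul1r -{1}sqrtr1.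
apply: rnorm_dilation ler01 (ler0n _ 2) _ _ (fun a => zpad_col_mx _ _).
- apply: col_mx_ind => u w; move: w; apply: col_mx_ind => v3 v4.
  move: u; apply: col_mx_ind => v1 v2.
  rewrite mul_col_mx mul0mx !mul_col_mx !mul_row_col !mul1mx !mul0mx ?addr0 ?add0r.
  by rewrite !vnorm2_col vnorm2_0 addr0 mul1r lerD // lerDl vnorm2_ge0.
- apply: col_mx_ind => u w.
  rewrite !mul_col_mx !mul_row_col !mul1mx !mul0mx !addr0.
  rewrite !vnorm2_col !vnorm2_0 !addr0 mulr2n mulrDl mul1r.
  by rewrite lerD // lerDl vnorm2_ge0.
Qed.

End RectangularNorms.

Variables (k : nat) (N1 N2 : mxnorms R k).
Hypotheses (H1 : is_opspace N1) (H2 : is_opspace N2).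
Hypotheses (U1 : compl_uncond N1) (U2 : compl_uncond N2).

Lemma haagerup_factorization n (u : mxT R k n) :
  exists p (x : 'I_k -> 'M[C]_(n, p)) (y : 'I_k -> 'M[C]_(p, n)),
    forall a b, u a b = x a *m y b.
Proof.
pose q (l : 'I_(k * n)) : 'I_k * 'I_n := enum_val (cast_ord (esym (mxvec_cast k n)) l).
have qE c r : q (mxvec_index c r) = (c, r) by rewrite /q cast_ordK enum_rankK.
exists (k * n)%N, (fun a => \matrix_(i, l) ((q l == (a, i))%:R : C)),
  (fun b => \matrix_(l, j) u (q l).1 b (q l).2 j).
move=> a b; apply/matrixP => i j; rewrite mxE.
rewrite (reindex _ (curry_mxvec_bij _ _)) /= (bigD1 (a, i)) //= big1 ?addr0.
  by rewrite !mxE qE eqxx mul1r.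
by move=> [c r] /= ne; rewrite !mxE qE (negbTE ne) mul0r.
Qed.

Lemma sign_doubling n p (x : 'I_k -> 'M[C]_(n, p)) (y : 'I_k -> 'M[C]_(p, n)) (i : 'I_k) :
  exists p' (x' : 'I_k -> 'M[C]_(n, p')) (y' : 'I_k -> 'M[C]_(p', n)),
    (forall a b, x' a *m y' b = if (a == i) == (b == i) then x a *m y b else 0) /\
    rnorm N1 x' * rnorm N2 y' <= rnorm N1 x * rnorm N2 y.
Proof.
pose eps a : C := if a == i then 1 else -1.
have eps_sign a : eps a = 1 \/ eps a = -1 by rewrite /eps; case: (a == i); [left|right].
exists (p + p)%N, (fun a => row_mx (x a) (eps a *: x a)),
  (fun a => col_mx (2^-1 *: y a) (2^-1 *: (eps a *: y a))); split.
  move=> a b; rewrite mul_row_col -!scalemxAr -!scalemxAl !scalerA -scalerDl.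
  rewrite /eps; case: (a == i); case: (b == i) => /=.
  - by rewrite -[RHS]scale1r; congr (_ *: _); field.
  - by rewrite -(scale0r (x a *m y b)); congr (_ *: _); field.
  - by rewrite -(scale0r (x a *m y b)); congr (_ *: _); field.
  - by rewrite -[RHS]scale1r; congr (_ *: _); field.
have x'_le : rnorm N1 (fun a => row_mx (x a) (eps a *: x a)) <= Num.sqrt 2 * rnorm N1 x.
  apply: le_trans (rnorm_row_mx H1 _ _) _.
  by rewrite ler_wpM2l ?sqrtr_ge0 // ge_max lexx rnorm_uncond.
have y'_le : rnorm N2 (fun a => col_mx (2^-1 *: y a) (2^-1 *: (eps a *: y a))) <=
             Num.sqrt 2 * (2^-1 * rnorm N2 y).
  apply: le_trans (rnorm_col_mx H2 _ _) _.
  rewrite ler_wpM2l ?sqrtr_ge0 // (rnormZ H2 _ (fun a => y a)).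
  rewrite (rnormZ H2 _ (fun a => eps a *: y a)) cabs_half ge_max lexx /=.
  by rewrite ler_wpM2l ?invr_ge0 ?ler0n // rnorm_uncond.
apply: le_trans (ler_pM (rnorm_ge0 H1 _) (rnorm_ge0 H2 _) x'_le y'_le) _.
rewrite mulrCA !mulrA -expr2 sqr_sqrtr ?ler0n // [2 * _]mulrC mulfK ?pnatr_eq0 //.
Qed.

Definition Delta_seq n (s : seq 'I_k) (u : mxT R k n) : mxT R k n :=
  fun a b => if all (fun j => (a == j) == (b == j)) s then u a b else 0.

Lemma Delta_enum n (u : mxT R k n) : Delta u = Delta_seq (enum 'I_k) u.
Proof.
apply: funext => a; apply: funext => b; rewrite /Delta /Delta_seq.
have [->|ab] := eqVneq a b; first by rewrite (introT allP) // => j _; rewrite eqxx.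
by case: allP => // /(_ a (mem_enum _ a)); rewrite eqxx [b == a]eq_sym (negbTE ab).
Qed.

Lemma Delta_seq_factor n (s : seq 'I_k) p (x : 'I_k -> 'M[C]_(n, p))
    (y : 'I_k -> 'M[C]_(p, n)) :
  exists p' (x' : 'I_k -> 'M[C]_(n, p')) (y' : 'I_k -> 'M[C]_(p', n)),
    (forall a b, x' a *m y' b = Delta_seq s (fun a b => x a *m y b) a b) /\
    rnorm N1 x' * rnorm N2 y' <= rnorm N1 x * rnorm N2 y.
Proof.
elim: s => [|j s [p1 [x1 [y1 [xy1E le1]]]]]; first by exists p, x, y.
have [p2 [x2 [y2 [xy2E le2]]]] := sign_doubling x1 y1 j.
exists p2, x2, y2; split; last exact: le_trans le2 le1.
by move=> a b; rewrite xy2E xy1E /Delta_seq /=; case: ((a == j) == (b == j)).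
Qed.

End HaagerupDelta.

Theorem lemma5p2 (R : realType) (k : nat) (N1 N2 : mxnorms R k)
  (H1 : is_opspace N1) (H2 : is_opspace N2)
  (U1 : compl_uncond N1) (U2 : compl_uncond N2) :
  forall n (u : mxT R k n),
    haagerup_norm N1 N2 (Delta u) <= haagerup_norm N1 N2 u.
Proof.
move=> n u; apply: lb_le_inf.
  have [p [x [y uE]]] := haagerup_factorization u.
  by exists (rnorm N1 x * rnorm N2 y), p, x, y.
move=> _ [p [x [y [uE ->]]]].
have [p' [x' [y' [xy'E le']]]] := Delta_seq_factor H1 H2 U1 U2 (enum 'I_k) x y.
apply: le_trans le'; apply: ge_inf.
  by exists 0 => _ [q [a [b [_ ->]]]]; rewrite mulr_ge0 // rnorm_ge0.
exists p', x', y'; split => // a b.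
by rewrite Delta_enum xy'E; congr Delta_seq; do 2!apply: funext => ? /=.
Qed.
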